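(* Let $n$ be a positive integer and let $a=(a_1,\ldots,a_n)$, $b=(b_1,\ldots,b_n)$ be vectors of nonnegative integers with $0\le a_k\le b_k$ for all $k\in[n]$. Then for all $j\in[n]$, \[\mathsf{invol}_j(b)\le \mathsf{invol}_j(a)\,n^{\|b-a\|_1}\prod_{k=1}^n\exp\!\left(\frac{b_k^2}{2k}\right),\] where $\|b-a\|_1=\sum_{k=1}^n|b_k-a_k|$.
   Context: For a vector $a$ of nonnegative integers and $m\ge1$ (with $m$ at most the length of $a$), $\mathsf{invol}_m(a)=\left(\prod_{k=1}^m k^{a_k}\right)\prod_{k=1}^m\sum_{j=0}^{\lfloor a_k/2\rfloor}\frac{(a_k)_{2j}}{(2k)^j j!}$, where $(x)_r=x(x-1)\cdots(x-r+1)$. *)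

From HB Require Import structures.
From mathcomp Require Import all_boot all_order all_algebra.
From mathcomp Require Import reals sequences.
Set Implicit Arguments. Unset Strict Implicit. Unset Printing Implicit Defensive.
Import Order.TTheory GRing.Theory Num.Theory.
Local Open Scope ring_scope.

(* Vectors a = (a_1,...,a_n) are represented as functions a : nat -> nat,
   using 1-based indices; only the values a 1, ..., a n matter. *)

Definition invol (R : realType) (m : nat) (a : nat -> nat) : R :=
  (\prod_(1 <= k < m.+1) ((k%:R : R) ^+ a k)) *
  \prod_(1 <= k < m.+1)
     \sum_(0 <= j < (a k)./2.+1)
        (((a k) ^_ (2 * j))%:R / (((2 * k) ^ j * j`!)%:R)).

(* invol_m(a) is the product of P(a) = prod_k k^{a_k} and of
   Q(a) = prod_k S(a_k, k), S(x, k) being the inner sum.  Since k <= n,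
   raising a_k to b_k multiplies k^{a_k} by k^{b_k - a_k} <= n^{b_k - a_k}.
   Since (x)_{2j} <= x^{2j}, the j-th term of S(x, k) is at most
   (x^2/2k)^j / j!, a term of the exponential series, so
   1 <= S(x, k) <= exp(x^2/2k) and S(b_k, k) <= S(a_k, k) exp(b_k^2/2k).
   Widening the ranges of the two extra factors from [1, j] to [1, n]
   only multiplies them by factors >= 1. *)

From HB Require Import structures.
From mathcomp Require Import all_boot all_order all_algebra.
From mathcomp Require Import reals sequences exp.
Set Implicit Arguments.
Unset Strict Implicit.
Unset Printing Implicit Defensive.

Import Order.TTheory GRing.Theory Num.Theory.
Local Open Scope ring_scope.

Lemma ffact_leq_expn (n m : nat) : (n ^_ m <= n ^ m)%N.
Proof.
rewrite ffact_prod -[in X in (_ <= X)%N](card_ord m) -prod_nat_const.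
by apply: leq_prod => i _; exact: leq_subr.
Qed.

Lemma prodr_ege1 (R : numDomainType) (I : Type) (r : seq I) (P : pred I)
    (F : I -> R) :
  (forall i, P i -> 1 <= F i) -> 1 <= \prod_(i <- r | P i) F i.
Proof. by move=> F_ge1; elim/big_ind: _ => // x y; exact: mulr_ege1. Qed.

Lemma expR_ge_partial_sum (R : realType) (x : R) (N : nat) : 0 <= x ->
  \sum_(0 <= i < N) x ^+ i / i`!%:R <= expR x.
Proof.
move=> x_ge0; apply: (nondecreasing_cvgn_le _ (is_cvg_series_exp_coeff x)).
by apply: nondecreasing_series => i _ _; exact: exp_coeff_ge0.
Qed.

Definition invol_sum (R : numFieldType) (x k : nat) : R :=
  \sum_(0 <= j < x./2.+1) ((x ^_ (2 * j))%:R / ((2 * k) ^ j * j`!)%:R).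

Lemma invol_sum_ge1 (R : numFieldType) (x k : nat) : 1 <= invol_sum R x k.
Proof.
rewrite /invol_sum big_nat_recl //= muln0 ffactn0 expn0 fact0 divr1 lerDl.
by apply: sumr_ge0 => i _; rewrite divr_ge0.
Qed.

Lemma invol_sum_ge0 (R : numFieldType) (x k : nat) : 0 <= invol_sum R x k.
Proof. exact: le_trans ler01 (invol_sum_ge1 _ _ _). Qed.

Lemma involE (R : realType) m a : invol R m a =
  (\prod_(1 <= k < m.+1) (k%:R : R) ^+ a k) *
  \prod_(1 <= k < m.+1) invol_sum R (a k) k.
Proof. by []. Qed.

Lemma invol_sum_le_expR (R : realType) (x k : nat) : (0 < k)%N ->
  invol_sum R x k <= expR ((x ^ 2)%:R / (2 * k)%:R).
Proof.
move=> k_gt0; apply: le_trans (expR_ge_partial_sum x./2.+1 _); last first.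
  by rewrite divr_ge0.
apply: ler_sum => j _.
rewrite expr_div_n -!natrX natrM invfM mulrA.
rewrite ler_wpM2r ?invr_ge0 ?ler0n // ler_wpM2r ?invr_ge0 ?ler0n //.
by rewrite ler_nat -expnM ffact_leq_expn.
Qed.

Lemma invol_ge0 (R : realType) (m : nat) (a : nat -> nat) : 0 <= invol R m a.
Proof.
rewrite involE mulr_ge0 // prodr_ge0 // => k _; first exact: exprn_ge0.
exact: invol_sum_ge0.
Qed.

Lemma prod_index_expr_le (R : numDomainType) (m n : nat) (a b : nat -> nat) :
  (m <= n)%N -> (forall k, (1 <= k <= m)%N -> (a k <= b k)%N) ->
  \prod_(1 <= k < m.+1) (k%:R : R) ^+ b k <=
  \prod_(1 <= k < m.+1) (k%:R : R) ^+ a k *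
    n%:R ^+ (\sum_(1 <= k < m.+1) (b k - a k)).
Proof.
move=> mn ab; rewrite -prodrXr -big_split /= !big_nat.
apply: ler_prod => k /andP[k_gt0 km].
rewrite exprn_ge0 //= -(subnKC (ab k _)) ?k_gt0 // exprD addKn.
rewrite ler_wpM2l ?exprn_ge0 // lerXn2r ?nnegrE ?ler0n //.
by rewrite ler_nat -ltnS (leq_trans km).
Qed.

Lemma prod_invol_sum_le (R : realType) (m : nat) (a b : nat -> nat) :
  \prod_(1 <= k < m.+1) invol_sum R (b k) k <=
  \prod_(1 <= k < m.+1) invol_sum R (a k) k *
    \prod_(1 <= k < m.+1) expR ((b k ^ 2)%:R / (2 * k)%:R).
Proof.
rewrite -big_split /= !big_nat; apply: ler_prod => k /andP[k_gt0 _].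
rewrite invol_sum_ge0 /=.
rewrite (le_trans (invol_sum_le_expR R (b k) k_gt0)) //.
by rewrite ler_peMl ?expR_ge0 ?invol_sum_ge1.
Qed.

Lemma invol_le_exp_bound (R : realType) (m n : nat) (a b : nat -> nat) :
  (m <= n)%N -> (forall k, (1 <= k <= m)%N -> (a k <= b k)%N) ->
  invol R m b <=
    invol R m a * n%:R ^+ (\sum_(1 <= k < m.+1) (b k - a k)) *
    \prod_(1 <= k < m.+1) expR ((b k ^ 2)%:R / (2 * k)%:R).
Proof.
move=> mn ab; rewrite !involE -mulrA mulrACA.
by apply: ler_pM; rewrite ?prod_index_expr_le ?prod_invol_sum_le //;
  apply: prodr_ge0 => k _; rewrite ?exprn_ge0 ?invol_sum_ge0.
Qed.

Theorem lemma5p3 (R : realType) (n : nat) (a b : nat -> nat) :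
  (0 < n)%N ->
  (forall k, (1 <= k <= n)%N -> (a k <= b k)%N) ->
  forall j, (1 <= j <= n)%N ->
    invol R j b <=
      invol R j a * (n%:R ^+ (\sum_(1 <= k < n.+1) (b k - a k))%N) *
      \prod_(1 <= k < n.+1) expR (((b k) ^ 2)%:R / (2 * k)%:R).
Proof.
move=> n_gt0 ab j /andP[j_gt0 jn].
have ab_j k : (1 <= k <= j)%N -> (a k <= b k)%N.
  by case/andP=> k_gt0 kj; rewrite ab // k_gt0 (leq_trans kj).
apply: le_trans (invol_le_exp_bound R jn ab_j) _.
rewrite -!(mulrA (invol R j a)) ler_wpM2l ?invol_ge0 //.
apply: ler_pM; rewrite ?exprn_ge0 ?prodr_ge0 //.
- by move=> k _; exact: expR_ge0.
- rewrite ler_weXn2l ?ler1n // [leqRHS](big_cat_nat _ (n := j.+1)) //=.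
  exact: leq_addr.
- rewrite [leRHS](big_cat_nat _ (n := j.+1)) //= ler_peMr ?prodr_ge0 //.
    by move=> k _; exact: expR_ge0.
  by apply: prodr_ege1 => k _; rewrite -[leLHS]expR0 ler_expR divr_ge0.
Qed.
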